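(* Let $K$ and $K'$ be fields with $K'$ a subfield of $K$. If $K$ has a multiplicative basis as a $K'$-vector space, then $K'=K$.
   Context: A $K'$-linear basis $B$ of a $K'$-algebra $R$ is multiplicative if for all $b,b'\in B$ either $bb'=0$ or $bb'\in B$. *)

From HB Require Import structures.
From mathcomp Require Import all_boot all_order all_algebra.
Set Implicit Arguments. Unset Strict Implicit. Unset Printing Implicit Defensive.
Import GRing.Theory.
Local Open Scope ring_scope.

(* K' is represented as a subfield S of the field K: a predicate closed under
   the field operations (mathcomp's [divring_closed]: contains 1, closed under
   subtraction, multiplication and division). *)

Definition lin_indep_over (K : fieldType) (S : {pred K}) (B : K -> Prop) : Prop :=
  forall (s : seq K) (c : K -> K),
    uniq s -> (forall x, x \in s -> B x) -> (forall x, x \in s -> c x \in S) ->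
    \sum_(x <- s) c x * x = 0 -> forall x, x \in s -> c x = 0.

Definition spans_over (K : fieldType) (S : {pred K}) (B : K -> Prop) : Prop :=
  forall y : K, exists (s : seq K) (c : K -> K),
    [/\ uniq s, (forall x, x \in s -> B x), (forall x, x \in s -> c x \in S)
      & y = \sum_(x <- s) c x * x].

Definition basis_over (K : fieldType) (S : {pred K}) (B : K -> Prop) : Prop :=
  lin_indep_over S B /\ spans_over S B.

Definition multiplicative (K : fieldType) (B : K -> Prop) : Prop :=
  forall b b', B b -> B b' -> b * b' = 0 \/ B (b * b').

From Pilot Require Import Defs.
From HB Require Import structures.
From mathcomp Require Import all_boot all_order all_algebra.
Set Implicit Arguments. Unset Strict Implicit. Unset Printing Implicit Defensive.
Local Open Scope ring_scope.

(* Coefficient sums of expansions in B give a well-defined K'-linear map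
   eps : K -> K' (the augmentation).  Basis elements of a field are nonzero,
   so B is closed under products and eps (b * y) = eps y for b in B.  Now
   b = b * 1 forces eps 1 = 1, while for b <> 1 the identity
   1 = (1 - b) * (1 - b)^-1 forces eps 1 = 0; hence B = {1} and K' = K. *)

Section Augmentation.
(* Imported locally: [GRing.Theory] exports a deprecated [multiplicative]
   that shadows [Defs.multiplicative] in the statement of [lemma5p3]. *)
Import GRing.Theory.

Lemma big_partition_undup (R : nmodType) (I J : eqType) (f : I -> J)
    (r : seq I) (F : I -> R) :
  \sum_(i <- r) F i = \sum_(j <- undup (map f r)) \sum_(i <- r | f i == j) F i.
Proof.
rewrite (exchange_big_dep xpredT) //=; apply: eq_big_seq => i ri.
rewrite -big_filter (eq_filter (a2 := pred1 (f i))) => [|j]; last exact: eq_sym.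
by rewrite filter_pred1_uniq ?undup_uniq ?big_seq1 // mem_undup map_f.
Qed.

Variables (K : fieldType) (S : {pred K}) (B : K -> Prop).
Hypothesis S_zmod : zmod_closed S.
Hypothesis B_free : lin_indep_over S B.

HB.instance Definition _ := GRing.isZmodClosed.Build K S S_zmod.

(* Formal combinations are lists of (coefficient, vector) pairs; unlike in
   [lin_indep_over], a vector may occur several times. *)
Definition combination_over (p : seq (K * K)) : Prop :=
  forall q, q \in p -> q.1 \in S /\ B q.2.

Definition lincomb (p : seq (K * K)) : K := \sum_(q <- p) q.1 * q.2.

Definition coef_sum (p : seq (K * K)) : K := \sum_(q <- p) q.1.

Lemma lincomb_eq0_coef_sum (p : seq (K * K)) :
  combination_over p -> lincomb p = 0 -> coef_sum p = 0.
Proof.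
move=> p_over p0; pose c y := \sum_(q <- p | q.2 == y) q.1.
have c_eq0 y : y \in undup (map snd p) -> c y = 0.
  apply: B_free (undup_uniq _) _ _ _ y.
  - by move=> z; rewrite mem_undup => /mapP [q /p_over [_ Bq] ->].
  - move=> z _; rewrite /c big_seq_cond.
    by apply: rpred_sum => q /andP [/p_over []].
  - rewrite -[RHS]p0 /lincomb (big_partition_undup snd); apply: eq_bigr => z _.
    by rewrite mulr_suml; apply: eq_bigr => q /eqP ->.
by rewrite /coef_sum (big_partition_undup snd) big1_seq // => y /andP [_ /c_eq0].
Qed.

Definition opp_comb (p : seq (K * K)) := [seq (- q.1, q.2) | q <- p].

Definition scale_comb (b : K) (p : seq (K * K)) := [seq (q.1, b * q.2) | q <- p].

Lemma lincomb_cat p p' : lincomb (p ++ p') = lincomb p + lincomb p'.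
Proof. exact: big_cat. Qed.

Lemma coef_sum_cat p p' : coef_sum (p ++ p') = coef_sum p + coef_sum p'.
Proof. exact: big_cat. Qed.

Lemma combination_over_cat p p' :
  combination_over p -> combination_over p' -> combination_over (p ++ p').
Proof.
by move=> p_over p'_over q; rewrite mem_cat => /orP [/p_over | /p'_over].
Qed.

Lemma combination_over_opp p : combination_over p -> combination_over (opp_comb p).
Proof. by move=> p_over _ /mapP [q /p_over [Sq Bq] ->]; rewrite /= rpredN. Qed.

Lemma lincomb_opp p : lincomb (opp_comb p) = - lincomb p.
Proof.
by rewrite /lincomb big_map -sumrN; apply: eq_bigr => q _; rewrite mulNr.
Qed.

Lemma coef_sum_opp p : coef_sum (opp_comb p) = - coef_sum p.
Proof. by rewrite /coef_sum big_map sumrN. Qed.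

Lemma lincomb_scale b p : lincomb (scale_comb b p) = b * lincomb p.
Proof.
by rewrite /lincomb big_map mulr_sumr; apply: eq_bigr => q _; rewrite mulrCA.
Qed.

Lemma coef_sum_scale b p : coef_sum (scale_comb b p) = coef_sum p.
Proof. by rewrite /coef_sum big_map. Qed.

Lemma coef_sum_eq p p' :
  combination_over p -> combination_over p' -> lincomb p = lincomb p' ->
  coef_sum p = coef_sum p'.
Proof.
move=> p_over p'_over pp'; apply/eqP.
rewrite -subr_eq0 -coef_sum_opp -coef_sum_cat; apply/eqP/lincomb_eq0_coef_sum.
  exact/combination_over_cat/combination_over_opp.
by rewrite lincomb_cat lincomb_opp pp' subrr.
Qed.

Hypothesis S1 : 1 \in S.
Hypothesis B_mul : Defs.multiplicative B.

Lemma basis_neq0 b : B b -> b != 0.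
Proof.
move=> Bb; apply: contra_neq (@oner_neq0 K) => b0.
have := @coef_sum_eq [:: (1, b)] [::].
rewrite /coef_sum /lincomb !big_seq1 !big_nil /= b0 mulr0; apply=> // q.
by rewrite inE => /eqP ->; rewrite -b0.
Qed.

Lemma basis_mul_closed b b' : B b -> B b' -> B (b * b').
Proof.
move=> Bb Bb'; have [/eqP|//] := B_mul Bb Bb'.
by rewrite mulf_eq0 (negPf (basis_neq0 Bb)) (negPf (basis_neq0 Bb')).
Qed.

Lemma combination_over_scale b p :
  B b -> combination_over p -> combination_over (scale_comb b p).
Proof.
move=> Bb p_over _ /mapP [q /p_over [Sq Bq] ->].
by split=> //; apply: basis_mul_closed.
Qed.

Hypothesis B_span : spans_over S B.

Lemma span_lincomb y : exists2 p, combination_over p & lincomb p = y.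
Proof.
have [s [c [_ sB sS ->]]] := B_span y; exists [seq (c x, x) | x <- s].
  by move=> _ /mapP [x xs ->]; split; [apply: sS | apply: sB].
by rewrite /lincomb big_map.
Qed.

Lemma basis_eq1 b : B b -> b = 1.
Proof.
move=> Bb; have [p p_over p1] := span_lincomb 1.
have coef_sum_p : coef_sum p = 1.
  have -> : 1 = coef_sum [:: (1, b)] by rewrite /coef_sum big_seq1.
  rewrite -(coef_sum_scale b).
  apply: coef_sum_eq (combination_over_scale Bb p_over) _ _.
    by move=> q; rewrite inE => /eqP ->.
  by rewrite lincomb_scale p1 /lincomb big_seq1 mulr1 mul1r.
apply/eqP; apply: contraT => b_neq1.
have b1_neq0 : 1 - b != 0 by rewrite subr_eq0 eq_sym.
have [r r_over r_inv] := span_lincomb (1 - b)^-1.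
pose r' := r ++ opp_comb (scale_comb b r).
have : coef_sum p = coef_sum r'.
  apply: coef_sum_eq => //.
    exact/combination_over_cat/combination_over_opp/combination_over_scale.
  rewrite p1 lincomb_cat lincomb_opp lincomb_scale r_inv.
  by rewrite -{1}[_^-1]mul1r -mulrBl divff.
rewrite coef_sum_p coef_sum_cat coef_sum_opp coef_sum_scale subrr.
by move/eqP; rewrite oner_eq0.
Qed.

Lemma in_base_field x : x \in S.
Proof.
have [p p_over <-] := span_lincomb x; rewrite /lincomb big_seq.
by apply: rpred_sum => q /p_over [Sq /basis_eq1 ->]; rewrite mulr1.
Qed.

End Augmentation.

Theorem lemma5p3 (K : fieldType) (S : {pred K}) (B : K -> Prop) :
  divring_closed S ->
  basis_over S B -> multiplicative B ->
  forall x : K, x \in S.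
Proof.
move=> S_div [B_free B_span] B_mul.
have S_zmod : zmod_closed S by exact/GRing.subring_closedB/GRing.divring_closedBM.
have [S1 _ _] := S_div.
exact: in_base_field S_zmod B_free S1 B_mul B_span.
Qed.
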